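(* Let $a=\sum_{t=0}^7a_te_t\in C\ell_{1,2}$ be nonzero with $P(a)=0$. Let $K=a_0^2+a_2^2+a_4^2+a_6^2$, $T_1=a_0a_1-a_2a_3-a_4a_5+a_6a_7$, $T_3=a_0a_3+a_1a_2+a_4a_7+a_5a_6$, $T_5=a_0a_5+a_1a_4-a_2a_7-a_3a_6$. Then $T_1^2+T_3^2+T_5^2=K^2$.
   Context: $C\ell_{1,2}$ is the real Clifford algebra with real basis $e_0=1,e_1,\dots,e_7$ (where $e_1=i_1$, $e_2=i_2$, $e_3=i_1i_2$, $e_4=i_3$, $e_5=i_1i_3$, $e_6=i_2i_3$, $e_7=i_1i_2i_3$, $i_1^2=1$, $i_2^2=i_3^2=-1$, $i_ti_m=-i_mi_t$ for $t\ne m$). For $a=\sum a_te_t$: $N(a)=a_0^2-a_1^2+a_2^2-a_3^2+a_4^2-a_5^2+a_6^2-a_7^2$, $T(a)=a_0a_7+a_2a_5-a_1a_6-a_3a_4$, $P(a)=N(a)^2+4T(a)^2$. *)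

From Stdlib Require Import Reals.
Open Scope R_scope.

(* An element a = sum_{t=0}^7 a_t e_t of Cl_{1,2}, given by its 8 real
   coordinates in the basis e_0=1, e_1=i1, e_2=i2, e_3=i1i2, e_4=i3,
   e_5=i1i3, e_6=i2i3, e_7=i1i2i3. *)
Record Cl12 : Type := mkCl12 {
  c0 : R; c1 : R; c2 : R; c3 : R; c4 : R; c5 : R; c6 : R; c7 : R }.

Definition Cl12_zero : Cl12 := mkCl12 0 0 0 0 0 0 0 0.

Definition Nf (a : Cl12) : R :=
  c0 a ^ 2 - c1 a ^ 2 + c2 a ^ 2 - c3 a ^ 2 + c4 a ^ 2 - c5 a ^ 2
  + c6 a ^ 2 - c7 a ^ 2.

Definition Tf (a : Cl12) : R :=
  c0 a * c7 a + c2 a * c5 a - c1 a * c6 a - c3 a * c4 a.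

Definition Pf (a : Cl12) : R := Nf a ^ 2 + 4 * Tf a ^ 2.

Definition Kf (a : Cl12) : R := c0 a ^ 2 + c2 a ^ 2 + c4 a ^ 2 + c6 a ^ 2.
Definition T1f (a : Cl12) : R :=
  c0 a * c1 a - c2 a * c3 a - c4 a * c5 a + c6 a * c7 a.
Definition T3f (a : Cl12) : R :=
  c0 a * c3 a + c1 a * c2 a + c4 a * c7 a + c5 a * c6 a.
Definition T5f (a : Cl12) : R :=
  c0 a * c5 a + c1 a * c4 a - c2 a * c7 a - c3 a * c6 a.

From Stdlib Require Import Reals Psatz.
Open Scope R_scope.

Lemma T1f_T3f_T5f_sum_sq (a : Cl12) :
  T1f a ^ 2 + T3f a ^ 2 + T5f a ^ 2 = Kf a ^ 2 - Kf a * Nf a - Tf a ^ 2.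
Proof. unfold T1f, T3f, T5f, Kf, Nf, Tf; ring. Qed.

Lemma Pf_eq0 (a : Cl12) : Pf a = 0 -> Nf a = 0 /\ Tf a = 0.
Proof. unfold Pf; intros HP; split; nra. Qed.

Theorem lemma3p3 (a : Cl12) :
  a <> Cl12_zero -> Pf a = 0 ->
  T1f a ^ 2 + T3f a ^ 2 + T5f a ^ 2 = Kf a ^ 2.
Proof.
  (* The identity behind the claim holds for every [a], zero included. *)
  intros _ HP.
  destruct (Pf_eq0 a HP) as [HN HT].
  rewrite T1f_T3f_T5f_sum_sq, HN, HT; ring.
Qed.
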